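(* Let $X$ be a geodesic metric space, $e\in X$ and $N$ a Morse gauge. Then $X^{(N)}_e$, with the metric restricted from $X$, is $8N(3,0)$-hyperbolic, i.e. $(x\cdot y)_w\ge\min\{(x\cdot z)_w,(z\cdot y)_w\}-8N(3,0)$ for all $w,x,y,z\in X^{(N)}_e$.
   Context: A Morse gauge is a function $N$ assigning to each $(K,C)$ ($K\ge1,C\ge0$) a number $N(K,C)\ge0$. A geodesic $\gamma$ is $N$-Morse if every $(K,C)$-quasi-geodesic with endpoints on $\gamma$ lies in the $N(K,C)$-neighbourhood of $\gamma$. $X^{(N)}_e$ is the set of $y\in X$ such that some geodesic from $e$ to $y$ is $N$-Morse. The Gromov product is $(x\cdot y)_w=\frac12(d(w,x)+d(w,y)-d(x,y))$. *)

From Stdlib Require Import Reals Lra.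
Open Scope R_scope.

Definition is_metric {X : Type} (d : X -> X -> R) : Prop :=
  (forall x y, 0 <= d x y) /\
  (forall x y, d x y = 0 <-> x = y) /\
  (forall x y, d x y = d y x) /\
  (forall x y z, d x z <= d x y + d y z).

Definition is_geodesic {X : Type} (d : X -> X -> R) (gamma : R -> X) (L : R) : Prop :=
  0 <= L /\
  forall s t, 0 <= s <= L -> 0 <= t <= L -> d (gamma s) (gamma t) = Rabs (s - t).

Definition geodesic_from_to {X : Type} (d : X -> X -> R) (gamma : R -> X) (L : R)
  (x y : X) : Prop :=
  is_geodesic d gamma L /\ gamma 0 = x /\ gamma L = y.

Definition geodesic_space {X : Type} (d : X -> X -> R) : Prop :=
  is_metric d /\
  forall x y : X, exists (gamma : R -> X) (L : R), geodesic_from_to d gamma L x y.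

(* q : [a, b] -> X is a (K,C)-quasi-geodesic, i.e. a (K,C)-quasi-isometric
   embedding of the compact interval [a, b] (no continuity required). *)
Definition quasi_geodesic {X : Type} (d : X -> X -> R) (K C : R) (q : R -> X)
  (a b : R) : Prop :=
  a <= b /\
  forall s t, a <= s <= b -> a <= t <= b ->
    Rabs (s - t) / K - C <= d (q s) (q t) /\ d (q s) (q t) <= K * Rabs (s - t) + C.

Definition morse_gauge (N : R -> R -> R) : Prop :=
  forall K C, 1 <= K -> 0 <= C -> 0 <= N K C.

Definition N_Morse {X : Type} (d : X -> X -> R) (N : R -> R -> R) (gamma : R -> X)
  (L : R) : Prop :=
  forall (K C : R) (q : R -> X) (a b : R),
    1 <= K -> 0 <= C ->
    quasi_geodesic d K C q a b ->
    (exists s, 0 <= s <= L /\ q a = gamma s) ->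
    (exists s, 0 <= s <= L /\ q b = gamma s) ->
    forall t, a <= t <= b -> exists s, 0 <= s <= L /\ d (q t) (gamma s) <= N K C.

Definition morse_stratum {X : Type} (d : X -> X -> R) (N : R -> R -> R) (e y : X) : Prop :=
  exists (gamma : R -> X) (L : R), geodesic_from_to d gamma L e y /\ N_Morse d N gamma L.

Definition gromov_product {X : Type} (d : X -> X -> R) (x y w : X) : R :=
  (d w x + d w y - d x y) / 2.

(* Fix geodesics [al] from [e] to [x] and [be] from [e] to [y], both N-Morse.
   Let [p] be a point of a geodesic [x,y] closest to [e]. Following a geodesic
   from [e] to [p] and then [p,x] is a (3,0)-quasi-geodesic, so by the Morse
   property the geodesic [e,p] stays N(3,0)-close to [al], and likewise to [be];
   moreover d(e,p) >= (x.y)_e. Comparing the points at distance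
   m = min((x.z)_e, (z.y)_e) from [e] on two such geodesics, for the pairs
   (x,z) and (z,y), gives the four-point inequality based at [e] with constant
   4 N(3,0). The usual change of base point doubles the constant. *)

From Stdlib Require Import Reals Lra.
Open Scope R_scope.

Definition gromov_ineq {X : Type} (d : X -> X -> R) (delta : R) (w x y z : X) : Prop :=
  gromov_product d x y w >= Rmin (gromov_product d x z w) (gromov_product d z y w) - delta.

Definition within {X : Type} (d : X -> X -> R) (D : R) (f : R -> X) (r : R)
  (g : R -> X) (a : R) : Prop :=
  forall t, 0 <= t <= r -> exists s, 0 <= s <= a /\ d (f t) (g s) <= D.

Definition clamp (l s : R) : R := Rmax 0 (Rmin l s).

Lemma clamp_in l s : 0 <= l -> 0 <= clamp l s <= l.
Proof. intros Hl. unfold clamp, Rmax, Rmin. repeat destruct Rle_dec; lra. Qed.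

Lemma clamp_id l s : 0 <= s <= l -> clamp l s = s.
Proof. intros Hs. unfold clamp, Rmax, Rmin. repeat destruct Rle_dec; lra. Qed.

Lemma clamp_lipschitz l s t : 0 <= l -> Rabs (clamp l s - clamp l t) <= Rabs (s - t).
Proof.
  intros Hl. unfold clamp, Rmax, Rmin.
  repeat destruct Rle_dec; unfold Rabs; repeat destruct Rcase_abs; lra.
Qed.

Lemma lipschitz_continuity_pt (f : R -> R) :
  (forall s t, Rabs (f s - f t) <= Rabs (s - t)) -> forall c, continuity_pt f c.
Proof.
  intros Hf c eps Heps. exists eps. split; [lra|].
  intros x [_ Hx]. simpl in *. unfold R_dist in *.
  eapply Rle_lt_trans; [apply Hf | exact Hx].
Qed.

Definition concat_back {X : Type} (p : R -> X) (rho : R) (g : R -> X) (r0 : R) : R -> X :=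
  fun t => if Rle_dec t rho then p t else g (r0 + rho - t).

Lemma gromov_ineq_base_change {X : Type} (d : X -> X -> R) (delta : R) (e w x y z : X) :
  (forall p q, d p q = d q p) ->
  gromov_ineq d delta e x y z -> gromov_ineq d delta e x y w ->
  gromov_ineq d delta e w z x -> gromov_ineq d delta e w z y ->
  gromov_ineq d (2 * delta) w x y z.
Proof.
  unfold gromov_ineq, gromov_product, Rmin.
  intros Hsym H1 H2 H3 H4.
  pose proof (Hsym w x). pose proof (Hsym w y). pose proof (Hsym y z). pose proof (Hsym z w).
  repeat destruct Rle_dec; lra.
Qed.

Section MorseStratum.

Context {X : Type} (d : X -> X -> R) (N : R -> R -> R).
Hypothesis d_metric : is_metric d.
Hypothesis d_geodesic : forall x y : X, exists g L, geodesic_from_to d g L x y.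

Lemma dist_sym p q : d p q = d q p.
Proof. destruct d_metric as (_ & _ & Hsym & _). apply Hsym. Qed.

Lemma dist_triangle p q r : d p r <= d p q + d q r.
Proof. destruct d_metric as (_ & _ & _ & Htri). apply Htri. Qed.

Lemma dist_lipschitz z p q : Rabs (d z p - d z q) <= d p q.
Proof.
  pose proof (dist_triangle z p q). pose proof (dist_triangle z q p).
  rewrite (dist_sym q p) in *. apply Rabs_le. lra.
Qed.

Lemma gromov_product_nonneg x y w : 0 <= gromov_product d x y w.
Proof.
  unfold gromov_product. pose proof (dist_triangle x w y).
  rewrite (dist_sym x w) in *. lra.
Qed.

Lemma gromov_product_le_dist x y e p :
  d x p + d p y = d x y -> gromov_product d x y e <= d e p.
Proof.
  intros Hp. unfold gromov_product.
  pose proof (dist_triangle e p x). pose proof (dist_triangle e p y).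
  rewrite (dist_sym p x) in *. lra.
Qed.

Lemma geodesic_dist_origin g L s : is_geodesic d g L -> 0 <= s <= L -> d (g 0) (g s) = s.
Proof. intros [_ Hg] Hs. rewrite Hg by lra. unfold Rabs; destruct Rcase_abs; lra. Qed.

Lemma geodesic_dist_end g L s : is_geodesic d g L -> 0 <= s <= L -> d (g s) (g L) = L - s.
Proof. intros [_ Hg] Hs. rewrite Hg by lra. unfold Rabs; destruct Rcase_abs; lra. Qed.

Lemma geodesic_reverse g L : is_geodesic d g L -> is_geodesic d (fun s => g (L - s)) L.
Proof.
  intros [HL Hg]. split; [exact HL|]. intros s t Hs Ht.
  rewrite Hg by lra. rewrite <- Rabs_Ropp. f_equal. ring.
Qed.

Lemma geodesic_param_close g L q s :
  is_geodesic d g L -> 0 <= s <= L -> Rabs (s - d (g 0) q) <= d q (g s).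
Proof.
  intros Hg Hs. pose proof (dist_lipschitz (g 0) (g s) q) as Hlip.
  rewrite (geodesic_dist_origin g L s Hg Hs) in Hlip.
  rewrite (dist_sym q (g s)). exact Hlip.
Qed.

Lemma geodesic_closest_point g l p :
  is_geodesic d g l ->
  exists r0, 0 <= r0 <= l /\ forall c, 0 <= c <= l -> d p (g r0) <= d p (g c).
Proof.
  intros Hg. pose proof Hg as [Hl Hgd].
  set (f := fun s => d p (g (clamp l s))).
  assert (Hf : forall c, continuity_pt f c).
  { apply lipschitz_continuity_pt. intros s t. unfold f.
    eapply Rle_trans; [apply dist_lipschitz|].
    rewrite Hgd by (apply clamp_in; lra). apply clamp_lipschitz, Hl. }
  destruct (continuity_ab_min f 0 l Hl (fun c _ => Hf c)) as [r0 [Hmin Hr0]].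
  exists r0. split; [exact Hr0|]. intros c Hc.
  specialize (Hmin c Hc). unfold f in Hmin. rewrite !clamp_id in Hmin; assumption.
Qed.

Section Detour.

Variables (g : R -> X) (l r0 : R) (e : X) (p : R -> X) (rho : R).
Hypothesis g_geodesic : is_geodesic d g l.
Hypothesis r0_in : 0 <= r0 <= l.
Hypothesis r0_closest : forall c, 0 <= c <= l -> d e (g r0) <= d e (g c).
Hypothesis p_geodesic : geodesic_from_to d p rho e (g r0).

(* The lower bound comes from the closest-point property: no [g u] is nearer
   to [e] than [g r0]. *)
Lemma detour_dist_bounds s u :
  0 <= s <= rho -> 0 <= u <= r0 ->
  (rho - s + (r0 - u)) / 3 <= d (p s) (g u) <= rho - s + (r0 - u).
Proof.
  intros Hs Hu. destruct p_geodesic as [Hp [Hp0 Hprho]]. pose proof Hp as [Hrho _].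
  assert (Hsr : d (p s) (g r0) = rho - s)
    by (rewrite <- Hprho; apply geodesic_dist_end; assumption).
  assert (Hes : d e (p s) = s) by (rewrite <- Hp0; apply (geodesic_dist_origin _ rho); assumption).
  assert (Her : d e (g r0) = rho)
    by (rewrite <- Hp0, <- Hprho; apply (geodesic_dist_origin _ rho); [assumption | lra]).
  assert (Hru : d (g r0) (g u) = r0 - u).
  { destruct g_geodesic as [_ Hgd]. rewrite Hgd by lra. unfold Rabs; destruct Rcase_abs; lra. }
  assert (Hclosest : d e (g r0) <= d e (g u)) by (apply r0_closest; lra).
  pose proof (dist_triangle e (p s) (g u)).
  pose proof (dist_triangle (p s) (g r0) (g u)).
  pose proof (dist_triangle (g r0) (p s) (g u)).
  rewrite (dist_sym (g r0) (p s)) in *. lra.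
Qed.

Lemma concat_back_quasi_geodesic :
  quasi_geodesic d 3 0 (concat_back p rho g r0) 0 (rho + r0).
Proof.
  pose proof p_geodesic as [[Hrho Hp] _]. split; [lra|].
  intros s t Hs Ht. unfold concat_back.
  pose proof (Rabs_pos (s - t)).
  destruct (Rle_dec s rho), (Rle_dec t rho).
  - rewrite Hp by lra. lra.
  - pose proof (detour_dist_bounds s (r0 + rho - t) ltac:(lra) ltac:(lra)).
    rewrite Rabs_left1 by lra. lra.
  - rewrite dist_sym.
    pose proof (detour_dist_bounds t (r0 + rho - s) ltac:(lra) ltac:(lra)).
    rewrite Rabs_pos_eq by lra. lra.
  - destruct g_geodesic as [_ Hgd]. rewrite Hgd by lra.
    replace (r0 + rho - s - (r0 + rho - t)) with (- (s - t)) by ring.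
    rewrite Rabs_Ropp. lra.
Qed.

Lemma detour_within_morse al a x :
  g 0 = x -> geodesic_from_to d al a e x -> N_Morse d N al a ->
  within d (N 3 0) p rho al a.
Proof.
  intros Hg0 [[Ha _] [Hal0 Hala]] Hmorse t Ht.
  destruct p_geodesic as [[Hrho _] [Hp0 Hprho]].
  destruct (Hmorse 3 0 (concat_back p rho g r0) 0 (rho + r0) ltac:(lra) ltac:(lra)
              concat_back_quasi_geodesic) with (t := t) as [s [Hs Hd]].
  - exists 0. split; [lra|]. unfold concat_back.
    destruct Rle_dec; [congruence | lra].
  - exists a. split; [lra|]. unfold concat_back. destruct Rle_dec.
    + replace r0 with 0 in * by lra. rewrite Rplus_0_r, Hprho. congruence.
    + replace (r0 + rho - (rho + r0)) with 0 by ring. congruence.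
  - lra.
  - exists s. split; [exact Hs|]. unfold concat_back in Hd.
    destruct Rle_dec; [exact Hd | lra].
Qed.

End Detour.

Lemma morse_tripod_leg e al a x be b y :
  geodesic_from_to d al a e x -> N_Morse d N al a ->
  geodesic_from_to d be b e y -> N_Morse d N be b ->
  exists p rho, is_geodesic d p rho /\ p 0 = e /\ gromov_product d x y e <= rho /\
    within d (N 3 0) p rho al a /\ within d (N 3 0) p rho be b.
Proof.
  intros Hal Hmal Hbe Hmbe.
  destruct (d_geodesic x y) as [g [l [Hg [Hg0 Hgl]]]].
  destruct (geodesic_closest_point g l e Hg) as [r0 [Hr0 Hclosest]].
  destruct (d_geodesic e (g r0)) as [p [rho Hp]].
  pose proof Hp as [Hpg [Hp0 Hprho]].
  exists p, rho. split; [exact Hpg|]. split; [exact Hp0|]. split; [|split].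
  - assert (Her : d e (g r0) = rho).
    { rewrite <- Hp0, <- Hprho. apply (geodesic_dist_origin p rho); [assumption | destruct Hpg; lra]. }
    rewrite <- Her. apply gromov_product_le_dist.
    rewrite <- Hg0, <- Hgl, (geodesic_dist_origin g l r0 Hg Hr0),
      (geodesic_dist_end g l r0 Hg Hr0).
    rewrite (geodesic_dist_origin g l l Hg) by (destruct Hg; lra). ring.
  - exact (detour_within_morse g l r0 e p rho Hg Hr0 Hclosest Hp al a x Hg0 Hal Hmal).
  - pose proof Hg as [Hl _].
    apply (detour_within_morse (fun s => g (l - s)) l (l - r0) e p rho
             (geodesic_reverse g l Hg)) with (x := y); try assumption.
    + lra.
    + intros c Hc. replace (l - (l - r0)) with r0 by ring. apply Hclosest. lra.
    + replace (l - (l - r0)) with r0 by ring. exact Hp.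
    + rewrite Rminus_0_r. exact Hgl.
Qed.

Lemma near_geodesic_dist_end g L q s D :
  is_geodesic d g L -> 0 <= s <= L -> d q (g s) <= D ->
  d q (g L) <= d (g 0) (g L) - d (g 0) q + 2 * D.
Proof.
  intros Hg Hs Hq. pose proof Hg as [HL _].
  pose proof (geodesic_param_close g L q s Hg Hs) as Hclose.
  pose proof (dist_triangle q (g s) (g L)).
  rewrite (geodesic_dist_end g L s Hg Hs) in *.
  rewrite (geodesic_dist_origin g L L Hg) by lra.
  unfold Rabs in Hclose. destruct Rcase_abs; lra.
Qed.

Lemma near_geodesic_same_dist g L q1 q2 s1 s2 D :
  is_geodesic d g L -> 0 <= s1 <= L -> 0 <= s2 <= L ->
  d q1 (g s1) <= D -> d q2 (g s2) <= D -> d (g 0) q1 = d (g 0) q2 ->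
  d q1 q2 <= 4 * D.
Proof.
  intros Hg Hs1 Hs2 Hq1 Hq2 Heq. pose proof Hg as [_ Hgd].
  pose proof (geodesic_param_close g L q1 s1 Hg Hs1) as Hc1.
  pose proof (geodesic_param_close g L q2 s2 Hg Hs2) as Hc2.
  pose proof (dist_triangle q1 (g s1) q2). pose proof (dist_triangle (g s1) (g s2) q2).
  rewrite (Hgd s1 s2 Hs1 Hs2), (dist_sym (g s2) q2) in *.
  unfold Rabs in *. repeat destruct Rcase_abs; lra.
Qed.

Lemma gromov_ineq_at_origin e al a x be b y ze c z :
  geodesic_from_to d al a e x -> N_Morse d N al a ->
  geodesic_from_to d be b e y -> N_Morse d N be b ->
  geodesic_from_to d ze c e z -> N_Morse d N ze c ->
  gromov_ineq d (4 * N 3 0) e x y z.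
Proof.
  intros Hal Hmal Hbe Hmbe Hze Hmze.
  destruct (morse_tripod_leg e al a x ze c z Hal Hmal Hze Hmze)
    as [p1 [r1 [Hp1 [Hp10 [Hr1 [Hx1 Hz1]]]]]].
  destruct (morse_tripod_leg e ze c z be b y Hze Hmze Hbe Hmbe)
    as [p2 [r2 [Hp2 [Hp20 [Hr2 [Hz2 Hy2]]]]]].
  set (m := Rmin (gromov_product d x z e) (gromov_product d z y e)).
  assert (Hm0 : 0 <= m) by (apply Rmin_glb; apply gromov_product_nonneg).
  assert (Hm1 : m <= r1) by (eapply Rle_trans; [apply Rmin_l | exact Hr1]).
  assert (Hm2 : m <= r2) by (eapply Rle_trans; [apply Rmin_r | exact Hr2]).
  assert (Hd1 : d e (p1 m) = m) by (rewrite <- Hp10; apply (geodesic_dist_origin _ r1); auto).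
  assert (Hd2 : d e (p2 m) = m) by (rewrite <- Hp20; apply (geodesic_dist_origin _ r2); auto).
  destruct (Hx1 m ltac:(lra)) as [t1 [Ht1 D1]], (Hz1 m ltac:(lra)) as [t2 [Ht2 D2]],
    (Hz2 m ltac:(lra)) as [t3 [Ht3 D3]], (Hy2 m ltac:(lra)) as [t4 [Ht4 D4]].
  destruct Hal as [Hal [Hal0 Hala]], Hbe as [Hbe [Hbe0 Hbeb]], Hze as [Hze [Hze0 _]].
  assert (Hx : d (p1 m) x <= d e x - m + 2 * N 3 0).
  { pose proof (near_geodesic_dist_end al a _ t1 _ Hal Ht1 D1) as Hend.
    rewrite Hal0, Hala, Hd1 in Hend. exact Hend. }
  assert (Hy : d (p2 m) y <= d e y - m + 2 * N 3 0).
  { pose proof (near_geodesic_dist_end be b _ t4 _ Hbe Ht4 D4) as Hend.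
    rewrite Hbe0, Hbeb, Hd2 in Hend. exact Hend. }
  assert (Hz : d (p1 m) (p2 m) <= 4 * N 3 0).
  { apply (near_geodesic_same_dist ze c _ _ t2 t3); try assumption. rewrite Hze0. congruence. }
  pose proof (dist_triangle x (p1 m) y). pose proof (dist_triangle (p1 m) (p2 m) y).
  rewrite (dist_sym x (p1 m)) in *. unfold gromov_ineq, gromov_product at 1. fold m. lra.
Qed.

End MorseStratum.

Theorem proposition3p2 (X : Type) (d : X -> X -> R) (e : X) (N : R -> R -> R) :
  geodesic_space d ->
  morse_gauge N ->
  forall w x y z : X,
    morse_stratum d N e w -> morse_stratum d N e x ->
    morse_stratum d N e y -> morse_stratum d N e z ->
    gromov_product d x y w >=
      Rmin (gromov_product d x z w) (gromov_product d z y w) - 8 * N 3 0.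
Proof.
  intros [Hmetric Hgeod] _ w x y z [gw [lw [Gw Mw]]] [gx [lx [Gx Mx]]]
    [gy [ly [Gy My]]] [gz [lz [Gz Mz]]].
  change (gromov_ineq d (8 * N 3 0) w x y z).
  replace (8 * N 3 0) with (2 * (4 * N 3 0)) by ring.
  apply (gromov_ineq_base_change d _ e); [apply (dist_sym d Hmetric) | ..];
    eapply (gromov_ineq_at_origin d N Hmetric Hgeod); eassumption.
Qed.
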